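(* Let $T$ be a nonempty rooted tree (labelled, unlabelled planar, or unlabelled non-planar), $G=U(T)$ its underlying graph, and $U\colon X^T\to X^G$ the simplicial map sending $(F;L_0\supseteq\cdots\supseteq L_n)$ to $(U(F);L_0\setminus L_1,\dots,L_{n-1}\setminus L_n)$. Then $U$ is relatively Segal if and only if $T$ has exactly one vertex.
   Context: Rooted trees and $X^T$: A rooted tree $T$ is a finite tree with a distinguished root vertex; its vertex set is partially ordered by $v\le w$ iff $v$ lies on the path from the root to $w$; a planar rooted tree additionally carries a total order on the upward edges at each vertex. A rooted forest is a disjoint union of rooted trees. For a vertex subset $S$, the subforest spanned by $S$ ($H|_S$) has vertex set $S$, the edges with both endpoints in $S$, and the induced structure. A subset $L$ defines a lower subforest if $w\in L$, $v\le w$ imply $v\in L$. For $n\ge1$ a layering of $n-1$ cuts of a forest $F$ is a chain $V(F)=L_0\supseteq\cdots\supseteq L_n=\varnothing$ of subsets each defining a lower subforest. An admissible subforest of $T$ is the subforest spanned by $L_i\setminus L_j$ ($i\le j$) for a layering of $T$. $X^T_0$ is a point; $X^T_n$ ($n\ge1$) is the set of pairs $(H;L_0\supseteq\cdots\supseteq L_n)$ with $H$ admissible and $L_\bullet$ a layering of $H$; for $n\ge2$, $d_0(H;L_\bullet)=(H|_{L_1};L_1\supseteq\cdots\supseteq L_n)$, $d_n(H;L_\bullet)=(H|_{L_0\setminus L_{n-1}};L_0\setminus L_{n-1}\supseteq\cdots\supseteq L_{n-1}\setminus L_{n-1})$, $d_i$ ($0<i<n$) deletes $L_i$, and $s_i$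 repeats $L_i$. In the unlabelled versions one takes isomorphism classes of such pairs under isomorphisms of rooted forests (planar-structure preserving in the planar case) carrying each $L_i$ onto $L'_i$. Graphs and $X^G$: For a finite graph $G$, a subgraph is a vertex subset with a set of edges having endpoints in it. $X^G_0=\{\varnothing\}$; $X^G_1$ is the set of subgraphs of $G$; $X^G_n$ ($n\ge1$) is the set of tuples $(H;S_1,\dots,S_n)$ with $H$ a subgraph and $S_1,\dots,S_n$ a partition of $V(H)$ into possibly empty disjoint sets; $d_0$ and $d_n$ delete $S_1$, resp. $S_n$, together with these vertices and incident edges from $H$; $d_i$ ($1\le i\le n-1$) merges $S_i$ and $S_{i+1}$; $s_i$ inserts $\varnothing$ after $S_i$. For unlabelled $G$ one takes isomorphism classes of tuples under graph isomorphisms preserving the parts. A map $f\colon X\to Y$ of simplicial sets with $X_0,Y_0$ singletons is relatively Segal if for each $n\ge2$ the commutative square with top $f_n\colon X_n\to Y_n$, bottom $f_1\times\cdots\times f_1\colon X_1^{\times n}\to Y_1^{\times n}$, and vertical arrows the Segal maps $X_n\to X_1\times\cdots\times X_1$, $Y_n\to Y_1\times\cdots\times Y_1$ (restriction to the $n$ consecutive edges $\{i-1,i\}$), is a pullback of sets. *)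

From mathcomp Require Import all_boot.
Set Implicit Arguments. Unset Strict Implicit. Unset Printing Implicit Defensive.

(* A rooted tree on the finite vertex type V is encoded by its root r and its
   parent function p (p r = r; every vertex reaches r by iterating p). *)

Section Trees.
Variables (V : finType) (r : V) (p : V -> V) (ord : rel V).

Definition is_rooted_tree : Prop :=
  p r = r /\ forall v, exists k, iter k p v = r.

Definition planar_structure : Prop :=
  forall u v w, u != r -> v != r -> w != r -> p u = p v -> p v = p w ->
    [/\ ~~ ord u u, (ord u v -> ord v w -> ord u w) & (u != v -> ord u v || ord v u)].

(* order of the subforest spanned by S: v <= w iff v lies on the path from
   the root of w's component (in the induced forest) to w *)
Definition le_in (S : {set V}) (v w : V) : Prop :=
  v \in S /\ w \in S /\
  exists k, iter k p w = v /\ forall j, j <= k -> iter j p w \in S.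

Definition lower_in (S L : {set V}) : Prop :=
  L \subset S /\ forall v w, w \in L -> le_in S v w -> v \in L.

Definition layering (S : {set V}) (n : nat) (L : seq {set V}) : Prop :=
  [/\ 1 <= n, size L = n.+1, nth set0 L 0 = S & nth set0 L n = set0] /\
  (forall i, i <= n -> lower_in S (nth set0 L i)) /\
  (forall i, i < n -> nth set0 L i.+1 \subset nth set0 L i).

(* vertex sets of admissible subforests of T *)
Definition admissible (S : {set V}) : Prop :=
  exists n L i j, [/\ layering setT n L, i <= j, j <= n &
                      S = nth set0 L i :\: nth set0 L j].

(* raw simplices of X^T: (vertex set of H; L_0, ..., L_n) *)
Definition rawT := ({set V} * seq {set V})%type.

Definition validT (n : nat) (x : rawT) : Prop :=
  admissible x.1 /\ layering x.1 n x.2.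

Definition layer (L : seq {set V}) (i : nat) : {set V} :=
  nth set0 L i :\: nth set0 L i.+1.

(* i-th Segal edge {i, i+1} (0-based) of a simplex of X^T *)
Definition segT (x : rawT) (i : nat) : rawT :=
  (layer x.2 i, [:: layer x.2 i; set0]).

Definition tree_edges : {set {set V}} :=
  [set [set w; p w] | w in [set w | w != r]].

(* raw simplices of X^G: (V(H), E(H); S_1, ..., S_n) *)
Definition rawG := ({set V} * {set {set V}} * seq {set V})%type.

Definition validG (n : nat) (y : rawG) : Prop :=
  let '(VH, E, P) := y in
  [/\ E \subset tree_edges,
      (forall e, e \in E -> e \subset VH),
      size P = n,
      (forall i j, i < n -> j < n -> i != j ->
         [disjoint nth set0 P i & nth set0 P j]) &
      \bigcup_(A <- P) A = VH].

(* i-th Segal edge (0-based) of a simplex of X^G *)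
Definition segG (y : rawG) (i : nat) : rawG :=
  let '(VH, E, P) := y in
  (nth set0 P i, [set e in E | e \subset nth set0 P i], [:: nth set0 P i]).

Definition UT (n : nat) (x : rawT) : rawG :=
  (x.1, [set e in tree_edges | e \subset x.1], [seq layer x.2 k | k <- iota 0 n]).

Definition parS (S : {set V}) (v w : V) : bool :=
  [&& v \in S, w \in S, w != r & p w == v].

Definition forest_iso (planar : bool) (x x' : rawT) : Prop :=
  exists phi : V -> V,
    [/\ {in x.1 &, injective phi},
        phi @: x.1 = x'.1 &
        (forall v w, v \in x.1 -> w \in x.1 ->
            parS x.1 v w = parS x'.1 (phi v) (phi w))] /\
    [/\ size x.2 = size x'.2,
        (forall k, phi @: nth set0 x.2 k = nth set0 x'.2 k) &
        (planar -> forall v u w, parS x.1 v u -> parS x.1 v w ->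
            ord u w = ord (phi u) (phi w))].

Definition graph_iso (y y' : rawG) : Prop :=
  let '(VH, E, P) := y in
  let '(VH', E', P') := y' in
  exists phi : V -> V,
    [/\ {in VH &, injective phi},
        phi @: VH = VH',
        [set phi @: (e : {set V}) | e in E] = E',
        size P = size P' &
        (forall k, phi @: nth set0 P k = nth set0 P' k)].

End Trees.

Inductive flavor := Labelled | UnlabelledPlanar | UnlabelledNonPlanar.

Section Segal.
Variables (V : finType) (r : V) (p : V -> V) (ord : rel V).

(* identification of simplices: equality (labelled) or isomorphism
   (unlabelled); elements of X_n are the classes of valid raw simplices *)
Definition isoT (fl : flavor) (x x' : rawT V) : Prop :=
  match fl with
  | Labelled => x = x'
  | UnlabelledPlanar => forest_iso r p ord true x x'
  | UnlabelledNonPlanar => forest_iso r p ord false x x'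
  end.

Definition isoG (fl : flavor) (y y' : rawG V) : Prop :=
  match fl with
  | Labelled => y = y'
  | _ => graph_iso y y'
  end.

(* U : X^T -> X^G is relatively Segal: for every n >= 2 the canonical map
   X_n -> Y_n x_{Y_1^n} X_1^n is a bijection (the square is a pullback),
   written on representatives of the classes. *)
Definition relSegal (fl : flavor) : Prop :=
  forall n, 2 <= n ->
  forall y : rawG V, validG r p n y ->
  forall xs : nat -> rawT V,
    (forall i, i < n -> validT p 1 (xs i)) ->
    (forall i, i < n -> isoG fl (UT r p 1 (xs i)) (segG y i)) ->
    (exists x, [/\ validT p n x, isoG fl (UT r p n x) y &
                   forall i, i < n -> isoT fl (segT x i) (xs i)]) /\
    (forall x x', validT p n x -> validT p n x' ->
       isoG fl (UT r p n x) y -> isoG fl (UT r p n x') y ->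
       (forall i, i < n -> isoT fl (segT x i) (xs i)) ->
       (forall i, i < n -> isoT fl (segT x' i) (xs i)) ->
       isoT fl x x').

End Segal.

From mathcomp Require Import all_boot zify.
Set Implicit Arguments. Unset Strict Implicit. Unset Printing Implicit Defensive.

(** If [T] is a single vertex, every isomorphism is the identity, a layering
    is recovered from its layers (each [L_k] is the union of the layers of index
    at least [k]), and the layers of any partition glue to a layering; so [U] is
    relatively Segal.

    Conversely, let [w] be a child of the root [r].  The edgeless graph on
    [{r, w}] with parts [{r}], [{w}] has Segal edges lifting to the admissible
    one-vertex forests [{r}] and [{w}], so a lift is an admissible two-vertex
    subforest without edges.  For labelled trees it must be [{r, w}], which is
    an edge.  For unlabelled trees it is a non-adjacent admissible pair
    [{a, b}], and then [T] contains a path [u - c - z].  The graph [u - c - z]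
    with parts [{c}], [{u, z}] has Segal edges lifting to [{r}] and [{a, b}];
    but in a lift both neighbours of the vertex over [c] lie in the lower
    subforest [L_1] while that vertex does not, so both are its parent and
    [u = z]. *)

Section Chains.
Variable T : finType.
Implicit Types P L : seq {set T}.

Definition tail_union P k := \bigcup_(k <= j < size P) nth set0 P j.

Definition tail_chain P := [seq tail_union P k | k <- iota 0 (size P).+1].

Definition layers L n := [seq layer L k | k <- iota 0 n].

Lemma tail_union_ge P k : size P <= k -> tail_union P k = set0.
Proof. by move=> Pk; rewrite /tail_union big_geq. Qed.

Lemma tail_unionS P k :
  k < size P -> tail_union P k = nth set0 P k :|: tail_union P k.+1.
Proof. by move=> kP; rewrite /tail_union big_ltn. Qed.

Lemma tail_union_subS P k : tail_union P k.+1 \subset tail_union P k.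
Proof.
case: (ltnP k (size P)) => kP; first by rewrite (tail_unionS kP) subsetUr.
by rewrite tail_union_ge ?sub0set // leqW.
Qed.

Lemma tail_union_sub0 P k : tail_union P k \subset tail_union P 0.
Proof. by elim: k => // k IHk; apply: subset_trans (tail_union_subS P k) IHk. Qed.

Lemma tail_union0 P : tail_union P 0 = \bigcup_(A <- P) A.
Proof. by rewrite (big_nth set0). Qed.

Lemma nth_tail_chain P k : nth set0 (tail_chain P) k = tail_union P k.
Proof.
case: (ltnP k (size P).+1) => kP.
  by rewrite (nth_map 0) ?size_iota // nth_iota.
by rewrite nth_default ?size_map ?size_iota // tail_union_ge // ltnW.
Qed.

Lemma layer_tail_chain P k :
  (forall i j, i < size P -> j < size P -> i != j ->
     [disjoint nth set0 P i & nth set0 P j]) ->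
  k < size P -> layer (tail_chain P) k = nth set0 P k.
Proof.
move=> disjP kP; rewrite /layer !nth_tail_chain (tail_unionS kP) setDUl setDv setU0.
apply/setDidPl; rewrite /tail_union big_nat_cond.
elim/big_ind: _ => [|B C|j].
- by rewrite disjoint_sym eq_disjoint0 // => x; rewrite inE.
- by rewrite -!setI_eq0 setIUr setU_eq0 => -> ->.
- rewrite andbT => /andP[kj jP]; apply: disjP => //.
  by rewrite neq_ltn kj.
Qed.

Lemma tail_chain_layers n L :
  size L = n.+1 -> nth set0 L n = set0 ->
  (forall i, i < n -> nth set0 L i.+1 \subset nth set0 L i) ->
  tail_chain (layers L n) = L.
Proof.
move=> sizeL Ln decL; have size_layers : size (layers L n) = n by rewrite size_map size_iota.
have tailE m k : n - k = m -> k <= n -> tail_union (layers L n) k = nth set0 L k.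
  elim: m k => [|m IHm] k nk kn.
    have -> : k = n by lia.
    by rewrite tail_union_ge ?size_layers.
  have kn' : k < n by lia.
  rewrite tail_unionS ?size_layers // IHm; [|lia|lia].
  rewrite (nth_map 0) ?size_iota // nth_iota // /layer setUC.
  by rewrite -{1}(setIidPr (decL k kn')) setID.
apply: (eq_from_nth (x0 := set0)) => [|k]; first by rewrite size_map size_iota size_layers sizeL.
rewrite size_map size_iota size_layers ltnS => kn.
by rewrite nth_tail_chain (tailE _ k erefl).
Qed.
End Chains.

Section Simplices.
Variables (V : finType) (r : V) (p : V -> V).
Implicit Types (S : {set V}) (x : rawT V) (y : rawG V).

Definition simplex1 S : rawT V := (S, [:: S; set0]).

Definition edgeless1 S : rawG V := (S, set0, [:: S]).

Lemma lower_in_refl S : lower_in p S S.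
Proof. by split => // v w _ []. Qed.

Lemma lower_in0 S : lower_in p S set0.
Proof. by split => [|v w]; rewrite ?sub0set ?inE. Qed.

Lemma layering1 S : layering p S 1 [:: S; set0].
Proof.
split=> //; split=> [[|[|i]] _ //=|[|i] //= _]; rewrite ?sub0set //.
  exact: lower_in_refl.
exact: lower_in0.
Qed.

Lemma validT_simplex1 S : admissible p S -> validT p 1 (simplex1 S).
Proof. by move=> admS; split=> //; apply: layering1. Qed.

Lemma validT1_simplex1 x : validT p 1 x -> x = simplex1 x.1.
Proof.
case: x => S L [_ [[_ sL L0 L1] _]]; congr pair.
by case: L sL L0 L1 => [|A [|B []]] //= _ -> ->.
Qed.

Lemma UT_simplex1 S :
  UT r p 1 (simplex1 S) = (S, [set e in tree_edges r p | e \subset S], [:: S]).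
Proof. by rewrite /UT /layer /= setD0. Qed.

Lemma UT_inj n x x' :
  validT p n x -> validT p n x' -> UT r p n x = UT r p n x' -> x = x'.
Proof.
case: x x' => [S L] [S' L'] [_ [[_ sL _ Ln] [_ decL]]] [_ [[_ sL' _ Ln'] [_ decL']]].
rewrite /= in sL Ln decL sL' Ln' decL'; case=> <- _ eq_layers; congr pair.
by rewrite -(tail_chain_layers sL Ln decL) -(tail_chain_layers sL' Ln' decL'); congr tail_chain.
Qed.

Lemma admissibleT : admissible p setT.
Proof. by exists 1, [:: setT; set0], 0, 1; split; rewrite /= ?setD0 //; apply: layering1. Qed.

Lemma admissible0 : admissible p set0.
Proof. by exists 1, [:: setT; set0], 0, 0; split; rewrite /= ?setDv //; apply: layering1. Qed.

Lemma segG_edgeless VH P i : segG (VH, set0, P) i = edgeless1 (nth set0 P i).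
Proof. by congr (_, _, _); apply/setP => e; rewrite !inE. Qed.

Lemma graph_iso_refl y : graph_iso y y.
Proof.
case: y => [[VH E] P]; exists id; split => [||||k]; rewrite ?imset_id //.
by rewrite (eq_imset _ (@imset_id V)) imset_id.
Qed.

Lemma isoG_refl fl y : isoG fl y y.
Proof. by case: fl => //=; apply: graph_iso_refl. Qed.

Lemma isoT_refl ord fl x : isoT r p ord fl x x.
Proof. by case: fl => //=; exists id; rewrite imset_id; split; split => // k; rewrite imset_id. Qed.

Lemma isoG_graph_iso fl y y' : fl <> Labelled -> isoG fl y y' = graph_iso y y'.
Proof. by case: fl. Qed.

Lemma graph_iso_edgeless1 (phi : V -> V) S :
  {in S &, injective phi} -> graph_iso (edgeless1 S) (edgeless1 (phi @: S)).
Proof.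
by move=> phi_inj; exists phi; split => [||||[|k]] //; rewrite ?imset0 //= nth_nil imset0.
Qed.

Lemma graph_iso_edgeless1_set1 a c : graph_iso (edgeless1 [set a]) (edgeless1 [set c]).
Proof.
rewrite -[[set c]](imset_set1 (fun _ => c) a).
by apply: graph_iso_edgeless1 => x1 x2; rewrite !inE => /eqP -> /eqP ->.
Qed.

Lemma graph_iso_edgeless1_set2 a b u z :
  a != b -> u != z -> graph_iso (edgeless1 [set a; b]) (edgeless1 [set u; z]).
Proof.
move=> ab uz; pose phi t := if t == a then u else z.
have -> : [set u; z] = phi @: [set a; b].
  by rewrite imsetU1 imset_set1 /phi eqxx eq_sym (negbTE ab).
apply: graph_iso_edgeless1 => x1 x2; rewrite !inE /phi.
by case/orP => /eqP -> /orP[] /eqP ->; rewrite ?eqxx // eq_sym (negbTE ab) => uz'; rewrite uz' eqxx in uz.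
Qed.

End Simplices.

Section TrivialTree.
Variables (V : finType) (r : V) (p : V -> V) (ord : rel V).
Hypothesis V_trivial : forall u v : V, u = v.

Lemma imset_trivial (f : V -> V) (A : {set V}) : f @: A = A.
Proof. by rewrite (eq_imset _ (fun x => V_trivial (f x) x)) imset_id. Qed.

Lemma isoG_trivial fl (y y' : rawG V) : isoG fl y y' -> y = y'.
Proof.
case: fl => //; case: y y' => [[VH E] P] [[VH' E'] P'] [phi [_ <- <- sP eqP]];
rewrite imset_trivial (eq_imset _ (imset_trivial phi)) imset_id; congr pair;
by apply: (eq_from_nth (x0 := set0)) => // k _; rewrite -eqP imset_trivial.
Qed.

Lemma isoT_trivial fl (x x' : rawT V) : isoT r p ord fl x x' -> x = x'.
Proof.
case: fl => //; case: x x' => [S L] [S' L'] [phi [[_ /= <- _] [/= sL eqL _]]];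
rewrite imset_trivial; congr pair;
by apply: (eq_from_nth (x0 := set0)) => // k _; rewrite -eqL imset_trivial.
Qed.

Lemma tree_edges_trivial : tree_edges r p = set0.
Proof.
by apply/setP => e; rewrite inE; apply/imsetP => -[w]; rewrite inE (V_trivial w r) eqxx.
Qed.

Lemma admissible_trivial (S : {set V}) : admissible p S.
Proof.
have [rS|rNS] := boolP (r \in S).
  suff -> : S = setT by apply: admissibleT.
  by apply/setP => v; rewrite inE (V_trivial v r).
suff -> : S = set0 by apply: admissible0.
by apply/setP => v; rewrite inE (V_trivial v r) (negbTE rNS).
Qed.

Lemma lift_trivial n (y : rawG V) (xs : nat -> rawT V) : 1 <= n ->
  validG r p n y -> (forall i, i < n -> validT p 1 (xs i)) ->
  (forall i, i < n -> UT r p 1 (xs i) = segG y i) ->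
  exists x, [/\ validT p n x, UT r p n x = y & forall i, i < n -> segT x i = xs i].
Proof.
case: y => [[VH E] P] n_gt0 [subE _ sP disjP unionP] valid_xs eq_xs.
rewrite -sP in disjP.
have layerP k : k < n -> layer (tail_chain P) k = nth set0 P k.
  by rewrite -sP; apply: layer_tail_chain.
exists (VH, tail_chain P); split.
- split; first exact: admissible_trivial.
  rewrite -unionP -tail_union0 /=; split.
    by split; rewrite // ?size_map ?size_iota ?nth_tail_chain ?tail_union_ge ?sP.
  split=> i _; rewrite !nth_tail_chain ?tail_union_subS //.
  by split=> [|v w wL _]; [apply: tail_union_sub0 | rewrite (V_trivial v w)].
- rewrite /UT /= tree_edges_trivial; congr (_, _, _).
    move: subE; rewrite tree_edges_trivial subset0 => /eqP ->.
    by apply/setP => e; rewrite !inE.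
  apply: (@eq_from_nth _ set0) => [|k]; rewrite size_map size_iota ?sP // => kn.
  by rewrite (nth_map 0) ?size_iota // nth_iota // layerP.
- move=> i i_lt; rewrite (validT1_simplex1 (valid_xs i i_lt)) /segT /= layerP //.
  by have /= -> := congr1 (fun y => y.1.1) (eq_xs i i_lt).
Qed.

Lemma relSegal_trivial fl : relSegal r p ord fl.
Proof.
move=> n n_ge2 y valid_y xs valid_xs iso_xs.
have eq_xs i : i < n -> UT r p 1 (xs i) = segG y i.
  by move=> i_lt; apply: isoG_trivial (iso_xs i i_lt).
split.
- have [x [valid_x <- seg_x]] := lift_trivial (ltnW n_ge2) valid_y valid_xs eq_xs.
  exists x; split => [//||i i_lt]; first exact: isoG_refl.
  by rewrite seg_x //; apply: isoT_refl.
- move=> x x' valid_x valid_x' /isoG_trivial Ux /isoG_trivial Ux' _ _.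
  by rewrite (UT_inj valid_x valid_x' (etrans Ux (esym Ux'))); apply: isoT_refl.
Qed.

End TrivialTree.

Section RootedTree.
Variables (V : finType) (r : V) (p : V -> V).
Hypothesis tree : is_rooted_tree r p.

Lemma iter_root k : iter k p r = r.
Proof. by case: tree => pr _; elim: k => //= k ->. Qed.

Lemma parent_neq w : w != r -> p w != w.
Proof.
move=> wr; apply/eqP => pw; case: tree => _ /(_ w) [k].
suff -> : iter k p w = w by apply/eqP.
by elim: k => //= k ->.
Qed.

Lemma grandparent_neq w : w != r -> p w != r -> p (p w) != w.
Proof.
move=> wr pwr; apply/eqP => ppw; case: tree => _ /(_ w) [k].
have : iter k p w \in [set w; p w].
  by elim: k => [|k]; rewrite ?set21 //= !inE => /orP[] /eqP ->; rewrite ?ppw eqxx ?orbT.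
by move=> + kr; rewrite kr !inE eq_sym (negbTE wr) eq_sym (negbTE pwr).
Qed.

Lemma root_child_exists v : v != r -> exists2 w, w != r & p w = r.
Proof.
move=> vr; case: tree => _ /(_ v) reach_r.
have [|m /eqP mr min_m] := ex_minnP (P := fun k => iter k p v == r).
  by case: reach_r => k kr; exists k; apply/eqP.
case: m mr min_m => [/= vr'|m mr min_m]; first by rewrite vr' eqxx in vr.
by exists (iter m p v) => //; apply/negP => /min_m; rewrite ltnn.
Qed.

Lemma tree_edge_parent w : w != r -> [set w; p w] \in tree_edges r p.
Proof. by move=> wr; apply/imsetP; exists w; rewrite ?inE. Qed.

Lemma tree_edgeP e : e \in tree_edges r p -> exists2 w, w != r & e = [set w; p w].
Proof. by case/imsetP => w; rewrite inE => wr ->; exists w. Qed.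

Lemma tree_edge_not_sub1 e a : e \in tree_edges r p -> ~~ (e \subset [set a]).
Proof.
case/tree_edgeP => w wr ->; rewrite subUset !sub1set !inE.
by apply/negP => /andP[/eqP wa /eqP pwa]; move: (parent_neq wr); rewrite pwa wa eqxx.
Qed.

Lemma tree_edge_sub2 e a b :
  e \in tree_edges r p -> e \subset [set a; b] -> e = [set a; b].
Proof.
case/tree_edgeP => w wr ->; rewrite subUset !sub1set !inE => /andP[wab pwab].
have := parent_neq wr.
by case/orP: wab pwab => /eqP -> /orP[] /eqP ->; rewrite ?eqxx // setUC.
Qed.

Lemma tree_edge_neq a b : [set a; b] \in tree_edges r p -> a != b.
Proof.
by move=> ab_edge; apply/eqP => ab; move: (tree_edge_not_sub1 a ab_edge); rewrite ab setUid subxx.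
Qed.

Lemma tree_edges_sub1 (E : {set {set V}}) a :
  E \subset tree_edges r p -> [set e in E | e \subset [set a]] = set0.
Proof.
move=> sub_E; apply/setP => e; rewrite !inE; case: (boolP (e \in E)) => //= eE.
by apply/negbTE/tree_edge_not_sub1; apply: subsetP sub_E e eE.
Qed.

Lemma lower_in_parent S L w : lower_in p S L -> w \in L -> p w \in S -> p w \in L.
Proof.
move=> [LS lowL] wL pwS; have wS : w \in S by apply: subsetP LS w wL.
by apply: (lowL _ _ wL); split=> //; split=> //; exists 1; split => // -[|[|j]].
Qed.

Lemma admissible_root : admissible p [set r].
Proof.
exists 2, [:: setT; [set r]; set0], 1, 2; split; rewrite /= ?setD0 //.
split=> //; split=> [[|[|[|i]]] //= _|[|[|i]] //= _]; rewrite ?subsetT ?sub0set //.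
- split=> [|v w]; rewrite ?subsetT // inE => /eqP -> [_ [_ [k [<- _]]]].
  by rewrite iter_root inE.
- exact: lower_in0.
Qed.

Lemma admissible_root_child w : w != r -> p w = r -> admissible p [set w].
Proof.
move=> wr pw; exists 3, [:: setT; [set r; w]; [set r]; set0], 1, 2; split => //.
  split=> //; split=> [[|[|[|[|i]]]] //= _|[|[|[|i]]] //= _]; rewrite ?subsetT ?sub0set //.
  - split=> [|v u]; rewrite ?subsetT // !inE => /orP[] /eqP -> [_ [_ [[|k] [<- _]]]];
      by rewrite ?iter_root ?iterSr ?pw ?iter_root ?eqxx ?orbT.
  - split=> [|v u]; rewrite ?subsetT // inE => /eqP -> [_ [_ [k [<- _]]]].
    by rewrite iter_root inE.
  - exact: lower_in0.
  - by rewrite sub1set !inE eqxx.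
apply/setP => v; rewrite /= !inE orbC; case: (v =P w) => [->|_] /=; first by rewrite wr.
by rewrite andNb.
Qed.

End RootedTree.

Section NontrivialTree.
Variables (V : finType) (r : V) (p : V -> V) (ord : rel V).
Hypothesis tree : is_rooted_tree r p.

Definition isolated_pair (a b : V) : rawG V := ([set a; b], set0, [:: [set a]; [set b]]).

Definition cherry (u c z : V) : rawG V :=
  ([set u; c; z], [set [set u; c]; [set c; z]], [:: [set c]; [set u; z]]).

Lemma relSegal_lift2 fl (y : rawG V) A B :
  relSegal r p ord fl -> validG r p 2 y -> admissible p A -> admissible p B ->
  isoG fl (UT r p 1 (simplex1 A)) (segG y 0) ->
  isoG fl (UT r p 1 (simplex1 B)) (segG y 1) ->
  exists2 x, validT p 2 x & isoG fl (UT r p 2 x) y.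
Proof.
move=> segal valid_y admA admB isoA isoB.
pose xs i := if i == 0 then simplex1 A else simplex1 B.
have valid_xs i : i < 2 -> validT p 1 (xs i).
  by case: i => [|[|]] //= _; apply: validT_simplex1.
have iso_xs i : i < 2 -> isoG fl (UT r p 1 (xs i)) (segG y i) by case: i => [|[|]] //.
by have [[x [valid_x iso_x _]] _] := segal 2 isT y valid_y xs valid_xs iso_xs; exists x.
Qed.

Lemma isolated_pair_lift fl w : relSegal r p ord fl -> w != r -> p w = r ->
  exists2 x, validT p 2 x & isoG fl (UT r p 2 x) (isolated_pair r w).
Proof.
move=> segal wr pw; apply: (relSegal_lift2 segal) (admissible_root tree) _ _ _.
- split=> //; first exact: sub0set.
  + by move=> e; rewrite inE.
  + by case=> [|[|i]] [|[|j]] //= _ _ _; rewrite disjoints1 inE // eq_sym.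
  + by rewrite !big_cons big_nil setU0.
- exact: (admissible_root_child tree wr pw).
- by rewrite UT_simplex1 (tree_edges_sub1 tree) // segG_edgeless; apply: isoG_refl.
- by rewrite UT_simplex1 (tree_edges_sub1 tree) // segG_edgeless; apply: isoG_refl.
Qed.

Lemma UT_neq_isolated_pair x w : w != r -> p w = r -> UT r p 2 x <> isolated_pair r w.
Proof.
move=> wr pw; case: x => S L [eS eE _].
have : [set w; p w] \in [set e in tree_edges r p | e \subset S].
  by rewrite inE tree_edge_parent // eS pw setUC subxx.
by rewrite eE inE.
Qed.

Lemma isolated_pair_preimage x a b : validT p 2 x -> a != b ->
  graph_iso (UT r p 2 x) (isolated_pair a b) ->
  exists a' b', [/\ a' != b', admissible p [set a'; b'] & [set a'; b'] \notin tree_edges r p].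
Proof.
case: x => S L [admS _] ab [phi [phi_inj phiS phiE _ _]].
have /cards2P [a' [b' [ab' eS]]] : #|S| == 2.
  by rewrite -(card_in_imset phi_inj) phiS cards2 ab.
exists a', b'; split; rewrite -?eS //; apply/negP => S_edge.
have : phi @: S \in [set phi @: (e : {set V}) | e in [set e in tree_edges r p | e \subset S]].
  by apply: imset_f; rewrite inE S_edge subxx.
by rewrite phiE inE.
Qed.

Lemma cherry_of_nonedge a b : a != b -> [set a; b] \notin tree_edges r p ->
  exists u c z, [/\ u != z, [set u; c] \in tree_edges r p & [set c; z] \in tree_edges r p].
Proof.
move=> ab ab_nonedge.
have [/existsP [w /andP [wr pwr]]|/existsPn depth1] :=
  boolP [exists w, (w != r) && (p w != r)].
  exists w, (p w), (p (p w)); split; rewrite ?tree_edge_parent //.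
  by rewrite eq_sym (grandparent_neq tree).
have child t : t != r -> p t = r by move=> tr; move: (depth1 t); rewrite tr => /negPn/eqP.
have edge_root t : t != r -> [set t; r] \in tree_edges r p.
  by move=> tr; rewrite -[in X in [set t; X]](child t tr) tree_edge_parent.
have [ar br] : a != r /\ b != r.
  split; apply: contraNneq ab_nonedge => tr; rewrite tr in ab *.
    by rewrite setUC edge_root // eq_sym.
  exact: edge_root.
by exists a, r, b; rewrite edge_root // setUC edge_root.
Qed.

Lemma cherry_lift fl a b u c z : fl <> Labelled -> relSegal r p ord fl ->
  a != b -> admissible p [set a; b] -> [set a; b] \notin tree_edges r p ->
  u != z -> [set u; c] \in tree_edges r p -> [set c; z] \in tree_edges r p ->
  exists2 x, validT p 2 x & graph_iso (UT r p 2 x) (cherry u c z).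
Proof.
move=> unlab segal ab adm_ab ab_nonedge uz uc cz.
have cu : c != u by rewrite eq_sym (tree_edge_neq tree uc).
have cz' : c != z := tree_edge_neq tree cz.
have sub_E : [set [set u; c]; [set c; z]] \subset tree_edges r p.
  by apply/subsetP => e; rewrite !inE => /orP[] /eqP ->.
have [x valid_x iso_x] : exists2 x, validT p 2 x & isoG fl (UT r p 2 x) (cherry u c z);
  last by rewrite isoG_graph_iso // in iso_x; exists x.
apply: (relSegal_lift2 segal _ (admissible_root tree) adm_ab).
- split=> //.
  + by move=> e; rewrite !inE => /orP[] /eqP ->; rewrite subUset !sub1set !inE !eqxx ?orbT.
  + case=> [|[|i]] [|[|j]] //= _ _ _; rewrite ?disjoints1 1?disjoint_sym ?disjoints1;
      by rewrite !inE negb_or cu cz'.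
  + apply/setP => t; rewrite !big_cons big_nil !inE.
    by case: (t == u); case: (t == c); case: (t == z).
- rewrite isoG_graph_iso // UT_simplex1 /segG /= !(tree_edges_sub1 tree) //.
  exact: graph_iso_edgeless1_set1.
- rewrite isoG_graph_iso // UT_simplex1 /segG /=.
  have -> : [set e in tree_edges r p | e \subset [set a; b]] = set0.
    apply/setP => e; rewrite !inE; apply/negP => /andP[e_edge /(tree_edge_sub2 tree e_edge) eab].
    by rewrite -eab e_edge in ab_nonedge.
  have -> : [set e in [set [set u; c]; [set c; z]] | e \subset [set u; z]] = set0.
    apply/setP => e; rewrite !inE; apply/negP => /andP[/orP[] /eqP ->];
      by rewrite subUset !sub1set !inE (negbTE cu) (negbTE cz') ?andbF.
  exact: graph_iso_edgeless1_set2.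
Qed.

Lemma cherry_no_lift x u c z : u != z -> c != u -> c != z -> validT p 2 x ->
  ~ graph_iso (UT r p 2 x) (cherry u c z).
Proof.
move=> uz cu cz; case: x => S L [_ [[_ _ L0 L2] [lowL _]]] [phi [phi_inj _ phiE _ phiP]].
rewrite /= in L0 L2 lowL phi_inj phiE phiP.
have low1 := lowL 1 isT; set L1 := nth set0 L 1 in low1 phiP.
have phiS0 : phi @: (S :\: L1) = [set c] by have := phiP 0; rewrite /layer L0.
have phiL1 : phi @: L1 = [set u; z] by have := phiP 1; rewrite /layer L2 setD0.
have phi_c v : v \in S -> (phi v == c) = (v \notin L1).
  move=> vS; have [vL|vNL] := boolP (v \in L1).
    have := imset_f phi vL; rewrite phiL1 !inE.
    by case/orP => /eqP ->; rewrite eq_sym ?(negbTE cu) ?(negbTE cz).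
  have : phi v \in phi @: (S :\: L1) by apply: imset_f; rewrite inE vNL.
  by rewrite phiS0 inE.
have lift_edge t : [set t; c] \in [set [set u; c]; [set c; z]] -> t != c ->
    exists2 w, w \in S & phi w = c /\ phi (p w) = t.
  rewrite -phiE => /imsetP [e]; rewrite inE => /andP[e_edge eS] phi_e tc.
  have [w wr ew] := tree_edgeP e_edge; subst e.
  move: eS; rewrite subUset !sub1set => /andP[wS pwS].
  have phi_ne : phi (p w) != phi w.
    by apply: contra (parent_neq tree wr) => /eqP /phi_inj ->.
  (* [L1] is closed under parents, so the vertex over [c] has no child in [L1]. *)
  have pw_not_c : phi (p w) != c.
    apply/negP => /eqP pwc.
    have pwNL : p w \notin L1 by rewrite -phi_c // pwc.
    have wL : w \in L1 by move: phi_ne; rewrite pwc eq_sym phi_c // negbK.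
    by rewrite (lower_in_parent low1 wL pwS) in pwNL.
  have phi_wpw : [set phi w; phi (p w)] = [set t; c] by rewrite phi_e imsetU1 imset_set1.
  have : phi (p w) \in [set t; c] by rewrite -phi_wpw !inE eqxx orbT.
  rewrite !inE (negbTE pw_not_c) orbF => /eqP pwt.
  have : c \in [set phi w; phi (p w)] by rewrite phi_wpw !inE eqxx orbT.
  by rewrite !inE pwt [c == t]eq_sym (negbTE tc) orbF => /eqP wc; exists w.
have uc : u != c by rewrite eq_sym.
have zc : z != c by rewrite eq_sym.
have uc_in : [set u; c] \in [set [set u; c]; [set c; z]] by rewrite !inE eqxx.
have zc_in : [set z; c] \in [set [set u; c]; [set c; z]] by rewrite setUC !inE eqxx orbT.
have [w1 w1S [w1c w1u]] := lift_edge u uc_in uc.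
have [w2 w2S [w2c w2z]] := lift_edge z zc_in zc.
have w12 : w1 = w2 by apply: phi_inj; rewrite ?w1c.
by move: uz; rewrite -w1u -w2z w12 eqxx.
Qed.

Lemma not_relSegal fl v : v != r -> ~ relSegal r p ord fl.
Proof.
move=> vr segal; have [w wr pw] := root_child_exists tree vr.
have [x valid_x iso_x] := isolated_pair_lift segal wr pw.
have [lab|unlab] : fl = Labelled \/ fl <> Labelled by case: fl segal iso_x; [left|right|right].
  by rewrite lab in iso_x; apply: UT_neq_isolated_pair wr pw iso_x.
rewrite isoG_graph_iso // in iso_x.
have rw : r != w by rewrite eq_sym.
have [a [b [ab adm_ab ab_nonedge]]] := isolated_pair_preimage valid_x rw iso_x.
have [u [c [z [uz uc cz]]]] := cherry_of_nonedge ab ab_nonedge.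
have [x' valid_x' iso_x'] := cherry_lift unlab segal ab adm_ab ab_nonedge uz uc cz.
have cu : c != u by rewrite eq_sym (tree_edge_neq tree uc).
exact: (cherry_no_lift uz cu (tree_edge_neq tree cz) valid_x' iso_x').
Qed.

End NontrivialTree.

Theorem mainTheorem7 (V : finType) (r : V) (p : V -> V) (ord : rel V)
  (fl : flavor) :
  is_rooted_tree r p ->
  (fl = UnlabelledPlanar -> planar_structure r p ord) ->
  (relSegal r p ord fl <-> #|V| = 1).
Proof.
move=> tree _; split => [segal|/fintype1 [v0 all_v0]].
  apply/eqP/fintype1P; exists r => v; apply/eqP/negPn/negP => vr.
  exact: (not_relSegal tree vr segal).
by apply: relSegal_trivial => u v; rewrite (all_v0 u) (all_v0 v).
Qed.
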